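(* Let $f:D\subset\mathbb{R}\times\mathbb{R}^3\to\mathbb{R}^3$ be a $C^3$ velocity field with $\operatorname{tr}\nabla f(t,x)\equiv 0$ (incompressible), let $t_0\in\mathbb{R}$, $T>0$, and let $x\in X(t_0)$ be a point whose solution exists on $[t_0,t_0+T]$. Let $N=\nabla\tilde f_T(x)$ be the mesochronic Jacobian, with characteristic polynomial $\lambda^3-t_{\tilde f}\lambda^2+m_{\tilde f}\lambda-d_{\tilde f}$, i.e. $t_{\tilde f}=\operatorname{tr}N$, $m_{\tilde f}=\operatorname{tr}\operatorname{cof}N$ (sum of the three principal $2\times2$ minors), $d_{\tilde f}=\det N$. Define $$\Sigma=\frac{d_{\tilde f}T^3}{8-2m_{\tilde f}T^2-3d_{\tilde f}T^3},$$ $$\Delta=-4d_{\tilde f}^4T^{12}-12d_{\tilde f}^3m_{\tilde f}T^{11}-13d_{\tilde f}^2m_{\tilde f}^2T^{10}-6d_{\tilde f}m_{\tilde f}^3T^9+(18d_{\tilde f}^2m_{\tilde f}-m_{\tilde f}^4)T^8+18d_{\tilde f}m_{\tilde f}^2T^7+(27d_{\tilde f}^2+4m_{\tilde f}^3)T^6.$$ Let $\mu_1,\mu_2,\mu_3$ be the eigenvalues (with multiplicity) of $\nabla\psi_T(x)$. Then: (i) If $8-2m_{\tilde f}T^2-3d_{\tilde f}T^3=0$, then $-1$ is an eigenvalue of $\nabla\psi_T(x)$, all three eigenvalues are real, and $x$ is non-mesohyperbolic. (ii) If $8-2m_{\tilde f}T^2-3d_{\tilde f}T^3\neq0$ (so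 $\Sigma$ is finite): if $\Sigma>0$, exactly two eigenvalues (counted with multiplicity) lie strictly inside the unit circle and one strictly outside; if $\Sigma<0$, exactly one lies strictly inside and two strictly outside; if $\Sigma=0$, then $1$ is an eigenvalue. (iii) If $\Delta<0$ the eigenvalues are real and distinct; if $\Delta>0$ there is one real eigenvalue and a pair of non-real complex-conjugate eigenvalues; if $\Delta=0$ all eigenvalues are real and (at least) two coincide. (iv) $x$ is mesohyperbolic on $[t_0,t_0+T]$ if and only if $d_{\tilde f}\neq0$ and $8-2m_{\tilde f}T^2-3d_{\tilde f}T^3\neq0$.
   Context: $\phi(t,t_0,x_0)$ denotes the solution of $\dot x=f(t,x)$ with $x(t_0)=x_0$. $X(t_0)\subset\mathbb{R}^3$ is an open set of initial values whose solutions exist on $[t_0,t_0+T]$. The time-$T$ map is $\psi_T(x)=\phi(t_0+T,t_0,x)$; by incompressibility $\det\nabla\psi_T\equiv1$. The mesochronic velocity is $\tilde f_T(x)=\frac1T\int_{t_0}^{t_0+T}f(\tau,\phi(\tau,t_0,x))\,d\tau$, so that $\psi_T(x)=x+T\tilde f_T(x)$ and $\nabla\psi_T(x)=\mathrm{Id}+T\nabla\tilde f_T(x)$; its Jacobian $\nabla\tilde f_T$ is the mesochronic Jacobian. A point $x$ is mesohyperbolic on $[t_0,t_0+T]$ if no eigenvalue of $\nabla\psi_T(x)$ has modulus $1$; otherwise it is non-mesohyperbolic. *)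

From HB Require Import structures.
From mathcomp Require Import all_boot all_order all_algebra.
Set Implicit Arguments. Unset Strict Implicit. Unset Printing Implicit Defensive.
Import Order.TTheory GRing.Theory Num.Theory.
Local Open Scope ring_scope.

Section Meso.
Variable C : numClosedFieldType.
Implicit Types (N M : 'M[C]_3) (T : C).

(* grad psi_T(x) = Id + T * grad f~_T(x), with N = grad f~_T(x) the mesochronic Jacobian *)
Definition gradPsi T N : 'M[C]_3 := 1%:M + T *: N.

Definition tr_f N : C := \tr N.
Definition m_f N : C := \tr (\adj N).   (* tr cof N = sum of principal 2x2 minors *)
Definition d_f N : C := \det N.

Definition denS T N : C := 8 - 2 * m_f N * T ^+ 2 - 3 * d_f N * T ^+ 3.
Definition Sigma T N : C := d_f N * T ^+ 3 / denS T N.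
Definition Delta T N : C :=
  let d := d_f N in let m := m_f N in
  - 4 * d ^+ 4 * T ^+ 12 - 12 * d ^+ 3 * m * T ^+ 11 - 13 * d ^+ 2 * m ^+ 2 * T ^+ 10
  - 6 * d * m ^+ 3 * T ^+ 9 + (18 * d ^+ 2 * m - m ^+ 4) * T ^+ 8
  + 18 * d * m ^+ 2 * T ^+ 7 + (27 * d ^+ 2 + 4 * m ^+ 3) * T ^+ 6.

Definition mesohyperbolic M : Prop := forall mu : C, eigenvalue M mu -> `|mu| != 1.
End Meso.

(* The eigenvalues of grad psi_T = I + T N are the roots of
   det ((x - 1) I - T N); incompressibility (det grad psi_T = 1) eliminates
   tr N and leaves the real cubic x^3 - s x^2 + q x - 1 with
   s = 3 - m T^2 - d T^3 and q = 3 - m T^2 - 2 d T^3.  Evaluating it at 0, 1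
   and -1 gives prod mu = 1, prod (1 - mu) = - d T^3 and
   prod (1 + mu) = 8 - 2 m T^2 - 3 d T^3, and Delta is minus its
   discriminant.  A real cubic has either three real roots or a real root c
   and a conjugate pair a, a^* with c |a|^2 = 1; in both cases
   prod (1 - mu^2) = - Sigma (8 - 2 m T^2 - 3 d T^3)^2 has the sign of
   prod (1 - |mu|), which together with prod |mu| = 1 fixes how many roots
   lie inside the unit disk.  The same comparison shows that a root on the
   unit circle forces 1 or -1 to be a root, i.e. d = 0 or
   8 - 2 m T^2 - 3 d T^3 = 0. *)

From HB Require Import structures.
From mathcomp Require Import all_boot all_order all_algebra.
From mathcomp Require Import ring.
Import Order.TTheory GRing.Theory Num.Theory.

Set Implicit Arguments.
Unset Strict Implicit.
Unset Printing Implicit Defensive.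

Local Open Scope ring_scope.

Lemma ord3P (i : 'I_3) : [\/ i = 0, i = 1 | i = 2].
Proof.
case: i => -[|[|[|//]]] ?; [constructor 1 | constructor 2 | constructor 3]; exact: val_inj.
Qed.

Lemma big_ord3 (R : Type) (idx : R) (op : Monoid.law idx) (F : 'I_3 -> R) :
  \big[op/idx]_(i < 3) F i = op (F 0) (op (F 1) (F 2)).
Proof.
rewrite !big_ord_recl big_ord0 Monoid.mulm1.
by congr (op (F _) (op (F _) (F _))); apply: val_inj.
Qed.

Lemma card_ord3 (P : pred 'I_3) : #|[set i | P i]| = (P 0%R + P 1%R + P 2%R)%N.
Proof.
rewrite -sum1_card big_mkcond big_ord3 !inE /= addnA.
by case: (P 0); case: (P 1); case: (P 2).
Qed.

Lemma ord3_third (j k : 'I_3) : j != k -> exists i, uniq [:: i; j; k].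
Proof.
case: (ord3P j) (ord3P k) => -> [] -> // _;
  by [exists 2 | exists 1 | exists 2 | exists 0 | exists 1 | exists 0].
Qed.

Lemma sym3_uniq (X Y : Type) (F : X -> X -> X -> Y) (u : 'I_3 -> X) (i j k : 'I_3) :
  uniq [:: i; j; k] ->
  (forall a b c, F a b c = F b a c) -> (forall a b c, F a b c = F a c b) ->
  F (u i) (u j) (u k) = F (u 0) (u 1) (u 2).
Proof.
move=> + F12 F23.
case: (ord3P i) (ord3P j) (ord3P k) => -> [] -> [] -> //= _.
all: first [ by [] | by rewrite F12 | by rewrite F23 | by rewrite F12 F23
           | by rewrite F23 F12 | by rewrite F12 F23 F12 ].
Qed.
Arguments sym3_uniq {X Y} F u {i j k}.

Lemma big_ord3_uniq (R : Type) (idx : R) (op : Monoid.com_law idx) (F : 'I_3 -> R)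
    (i j k : 'I_3) :
  uniq [:: i; j; k] -> \big[op/idx]_(l < 3) F l = op (F i) (op (F j) (F k)).
Proof.
move=> ijk; rewrite big_ord3; symmetry.
apply: (sym3_uniq (fun a b c => op a (op b c)) _ ijk) => a b c.
  by rewrite Monoid.mulmCA.
by rewrite [op b c]Monoid.mulmC.
Qed.

(* Laplace expansion produces indices such as [lift 0 (lift 0 0)]; rewriting
   [A] through [inord] makes equal indices syntactically equal for [ring]. *)
Lemma matrix_inordE (T : Type) n (A : 'M[T]_n.+1) :
  A = \matrix_(i, j) A (inord i) (inord j).
Proof. by apply/matrixP => i j; rewrite mxE !inord_val. Qed.

Section Matrix3.
Variable R : comNzRingType.
Implicit Type A : 'M[R]_3.

Lemma det_mx33 A :
  \det A = A 0 0 * A 1 1 * A 2 2 - A 0 0 * A 1 2 * A 2 1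
         - A 0 1 * A 1 0 * A 2 2 + A 0 1 * A 1 2 * A 2 0
         + A 0 2 * A 1 0 * A 2 1 - A 0 2 * A 1 1 * A 2 0.
Proof.
rewrite (expand_det_row _ 0) !big_ord_recl big_ord0 /cofactor.
rewrite !(expand_det_row _ 0) !big_ord_recl !big_ord0 /cofactor !det_mx11 !mxE.
by rewrite [A]matrix_inordE !mxE /=; ring.
Qed.

Lemma mxtrace_adj33 A :
  \tr (\adj A) = A 1 1 * A 2 2 - A 1 2 * A 2 1 + A 0 0 * A 2 2 - A 0 2 * A 2 0
                + A 0 0 * A 1 1 - A 0 1 * A 1 0.
Proof.
rewrite /mxtrace !big_ord_recl big_ord0 !mxE /cofactor.
rewrite !(expand_det_row _ 0) !big_ord_recl !big_ord0 /cofactor !det_mx11 !mxE.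
by rewrite [A]matrix_inordE !mxE /=; ring.
Qed.

Lemma det_scalar_add_scale33 A (a b : R) :
  \det (a%:M + b *: A) =
    a ^+ 3 + a ^+ 2 * b * \tr A + a * b ^+ 2 * \tr (\adj A) + b ^+ 3 * \det A.
Proof.
rewrite !det_mx33 mxtrace_adj33 /mxtrace !big_ord_recl big_ord0 !mxE /=.
by rewrite [A]matrix_inordE !mxE /= ?mulr1n ?mulr0n; ring.
Qed.
End Matrix3.

Lemma horner_char_poly (R : comNzRingType) n (A : 'M[R]_n) x :
  (char_poly A).[x] = \det (x%:M - A).
Proof.
rewrite -horner_evalE -det_map_mx map_mxB map_scalar_mx /= horner_evalE hornerX.
by congr (\det (_ - _)); apply/matrixP => i j; rewrite !mxE /= horner_evalE hornerC.
Qed.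

Lemma coef2_prod_XsubC3 (R : comNzRingType) (mu : 'I_3 -> R) :
  (\prod_i ('X - (mu i)%:P))`_2 = - \sum_i mu i.
Proof.
have := @coefPn_prod_XsubC R [seq mu i | i <- enum 'I_3].
by rewrite size_map size_enum_ord !big_map; apply.
Qed.

Section RealMatrix.
Variables (C : numClosedFieldType) (n : nat) (A : 'M[C]_n).
Hypothesis real_A : A \is a mxOver Num.real.

Lemma map_conj_real_mx : map_mx Num.conj A = A.
Proof. by apply/matrixP => i j; rewrite mxE /= conj_Creal // (mxOverP real_A). Qed.

Lemma char_poly_real : char_poly A \is a polyOver Num.real.
Proof.
by apply/polyOverP => i; rewrite CrealE -coef_map map_char_poly map_conj_real_mx.
Qed.

Lemma det_real : \det A \is Num.real.
Proof. by rewrite CrealE -det_map_mx map_conj_real_mx. Qed.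

Lemma trace_adj_real : \tr (\adj A) \is Num.real.
Proof. by rewrite CrealE -trace_map_mx map_mx_adj map_conj_real_mx. Qed.
End RealMatrix.

Ltac split_sign_factor h :=
  first [ rewrite (pmulr_rgt0 _ h) | rewrite (nmulr_rgt0 _ h)
        | rewrite (pmulr_rlt0 _ h) | rewrite (nmulr_rlt0 _ h) ].

Lemma card_lt1_gt1 (R : numDomainType) (u : 'I_3 -> R) :
  (forall i, 0 <= u i) -> \prod_i u i = 1 ->
  [/\ \prod_i (1 - u i) < 0 -> #|[set i | u i < 1]| = 2 /\ #|[set i | 1 < u i]| = 1
    & 0 < \prod_i (1 - u i) -> #|[set i | u i < 1]| = 1 /\ #|[set i | 1 < u i]| = 2].
Proof.
have cmp1 (x : R) : 0 <= x -> [\/ x < 1, x = 1 | 1 < x].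
  by move=> x0; case: (real_ltgtP (ger0_real x0) (@real1 R)); constructor.
(* Place each [u i] relative to 1: if none equals 1, they can be neither all
   below nor all above 1, and in the mixed cases the sign of the product
   contradicts one of the two premises. *)
move=> u_ge0; rewrite !card_ord3 !big_ord3 /=.
case: (cmp1 _ (u_ge0 0)) (cmp1 _ (u_ge0 1)) (cmp1 _ (u_ge0 2)) => h0 [] h1 [] h2;
  rewrite ?h0 ?h1 ?h2 ?subrr ?(mul0r, mulr0, ltxx) // => /eqP prod1.
all: try by move: prod1; rewrite lt_eqF //;
  apply: mulr_ilt1 => //; [exact: mulr_ge0 | exact: mulr_ilt1].
all: try by move: prod1; rewrite gt_eqF //; apply: mulr_egt1 => //; exact: mulr_egt1.
all: rewrite ?(lt_gtF h0, lt_gtF h1, lt_gtF h2).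
all: move: h0 h1 h2; rewrite -?[_ < 1]subr_gt0 -?[1 < _]subr_lt0 => h0 h1 h2.
all: split=> hR //; exfalso; move: hR; apply/negP.
all: by split_sign_factor h0; split_sign_factor h1; rewrite ?h2 ?(lt_gtF h2).
Qed.

Definition discr3 {R : comNzRingType} (a b c : R) := ((a - b) * (b - c) * (c - a)) ^+ 2.

Lemma discr3E (R : comNzRingType) (a b c : R) :
  discr3 a b c =
    let e1 := a + b + c in let e2 := a * b + b * c + c * a in let e3 := a * b * c in
    e1 ^+ 2 * e2 ^+ 2 - 4 * e2 ^+ 3 - 4 * e1 ^+ 3 * e3 + 18 * e1 * e2 * e3 - 27 * e3 ^+ 2.
Proof. by rewrite /discr3 /=; ring. Qed.

Section Discriminant3.
Variable C : numClosedFieldType.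
Implicit Types a b c : C.

Lemma discr3_real_ge0 a b c :
  a \is Num.real -> b \is Num.real -> c \is Num.real -> 0 <= discr3 a b c.
Proof. by move=> ra rb rc; rewrite real_exprn_even_ge0 // !rpredM // rpredB. Qed.

Lemma discr3_conj_pair_lt0 a c :
  a \isn't Num.real -> c \is Num.real -> discr3 c a a^* < 0.
Proof.
move=> nreal_a real_c.
have im_a : a^* - a != 0 by rewrite subr_eq0 -CrealE.
have ca : c - a != 0 by apply: contraNneq nreal_a => /eqP; rewrite subr_eq0 => /eqP <-.
have -> : discr3 c a a^* = (a^* - a) ^+ 2 * ((c - a) * (c - a)^*) ^+ 2.
  by rewrite /discr3 rmorphB /= (conj_Creal real_c); ring.
rewrite pmulr_llt0 ?exprn_gt0 ?mul_conjC_gt0 //.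
have : 0 < (a^* - a) * (a^* - a)^* by rewrite mul_conjC_gt0.
by rewrite rmorphB /= conjCK -[a - a^*]opprB mulrN oppr_gt0 -expr2.
Qed.
End Discriminant3.

Section RealCubic.
Variables (C : numClosedFieldType) (mu : 'I_3 -> C).
Local Notation p := (\prod_i ('X - (mu i)%:P)).
Hypothesis real_char : p \is a polyOver Num.real.

Lemma sum_roots_real : \sum_i mu i \is Num.real.
Proof. by rewrite -[X in X \is _]opprK -coef2_prod_XsubC3 rpredN (polyOverP real_char). Qed.

Lemma conjC_root i : exists j, mu j = (mu i)^*.
Proof.
have p_conj : map_poly Num.conj p = p.
  by apply/polyP => n; rewrite coef_map /= conj_Creal // (polyOverP real_char).
have : p.[(mu i)^*] == 0.
  rewrite -{1}p_conj horner_map /= horner_prod.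
  by rewrite (bigD1 i) //= hornerXsubC subrr mul0r conjC0.
by rewrite horner_prod => /prodf_eq0[j _]; rewrite hornerXsubC subr_eq0 => /eqP ->; exists j.
Qed.

Lemma real_or_conj_pair :
  (forall i, mu i \is Num.real) \/
  exists i j k : 'I_3, [/\ uniq [:: i; j; k], mu i \is Num.real,
                           mu j \isn't Num.real & mu k = (mu j)^*].
Proof.
have [all_real | ] := boolP [forall i, mu i \is Num.real].
  by left => i; apply: (forallP all_real).
move=> /forallPn[j nreal_j].
right; have [k conj_k] := conjC_root j.
have jk : j != k by apply: contraNneq nreal_j => jk; rewrite CrealE -conj_k jk.
have [i ijk] := ord3_third jk; exists i, j, k; split => //.
have sum_ijk : \sum_l mu l = mu i + (mu j + mu k).
  by rewrite big_ord3; symmetry; apply: (sym3_uniq (fun a b c => a + (b + c)) _ ijk) => *; ring.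
have -> : mu i = \sum_l mu l - (mu j + (mu j)^*) by rewrite sum_ijk conj_k; ring.
by rewrite rpredB ?sum_roots_real // CrealE rmorphD /= conjCK addrC.
Qed.

Local Notation discr := (discr3 (mu 0) (mu 1) (mu 2)).

Lemma discr_ge0_real : 0 <= discr -> forall i, mu i \is Num.real.
Proof.
case: real_or_conj_pair => // -[i [j [k [ijk real_i nreal_j conj_k]]]].
rewrite -(sym3_uniq discr3 _ ijk) => [|*|*]; try by rewrite /discr3; ring.
by rewrite conj_k => /le_gtF; rewrite discr3_conj_pair_lt0.
Qed.

Lemma discr_gt0_real_distinct :
  0 < discr -> (forall i, mu i \is Num.real) /\ (forall i j, i != j -> mu i != mu j).
Proof.
move=> discr_gt0; split; first exact/discr_ge0_real/ltW.
move: discr_gt0; rewrite lt0r /discr3 expf_eq0 /= !mulf_eq0 !subr_eq0 !negb_or.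
case/andP => /andP[/andP[n01 n12] n20] _ i j.
by case: (ord3P i) (ord3P j) => -> [] -> //= _; rewrite 1?eq_sym.
Qed.

Lemma discr_lt0_conj_pair :
  discr < 0 -> exists i j k : 'I_3, [/\ uniq [:: i; j; k], mu i \is Num.real,
                                        mu j \isn't Num.real & mu k = (mu j)^*].
Proof.
case: real_or_conj_pair => // all_real.
by move/lt_geF; rewrite discr3_real_ge0.
Qed.

Lemma discr_eq0_real_multiple :
  discr = 0 -> (forall i, mu i \is Num.real) /\ exists i j : 'I_3, i != j /\ mu i = mu j.
Proof.
move=> discr0; split; first by apply: discr_ge0_real; rewrite discr0.
move/eqP: discr0; rewrite /discr3 expf_eq0 /= !mulf_eq0 !subr_eq0.
by case/orP => [/orP[]|] /eqP; [exists 0, 1 | exists 1, 2 | exists 2, 0].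
Qed.

Hypothesis prod_roots : \prod_i mu i = 1.

Lemma conj_pair_real_gt0 i j k :
  uniq [:: i; j; k] -> mu j \isn't Num.real -> mu k = (mu j)^* -> 0 < mu i.
Proof.
move=> ijk nreal_j conj_k.
have norm_j : 0 < mu j * (mu j)^*.
  by rewrite mul_conjC_gt0; apply: contraNneq nreal_j => ->; apply: real0.
have : mu i * (mu j * (mu j)^*) = 1 by rewrite -conj_k -prod_roots (big_ord3_uniq _ _ ijk).
by rewrite -(pmulr_lgt0 _ norm_j) => ->; apply: ltr01.
Qed.

Lemma prod_one_sub_sqr_sign :
  exists2 c, 0 < c & \prod_l (1 - mu l ^+ 2) = c * \prod_l (1 - `|mu l|).
Proof.
have one_add_norm_gt0 (x : C) : 0 < 1 + `|x| by rewrite ltr_pwDl.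
case: real_or_conj_pair => [all_real | [i [j [k [ijk real_i nreal_j conj_k]]]]].
  exists (\prod_l (1 + `|mu l|)); first by apply: prodr_gt0.
  by rewrite -big_split; apply: eq_bigr => l _; rewrite -real_normK //=; ring.
have norms : `|mu i| * (`|mu j| * `|mu j|) = 1.
  have := congr1 Num.norm prod_roots.
  by rewrite normr_prod (big_ord3_uniq _ _ ijk) /= conj_k norm_conjC normr1.
have sq_i : mu i ^+ 2 = `|mu i| ^+ 2 by rewrite real_normK.
rewrite !(big_ord3_uniq _ _ ijk) /= conj_k norm_conjC sq_i.
(* If |mu j| = 1 then |mu i| = 1 too, and both products vanish. *)
have [norm_j1 | norm_j_neq1] := eqVneq `|mu j| 1.
  exists 1 => //; move: norms; rewrite norm_j1 !mulr1 => ->; ring.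
have sq_j : 1 - mu j ^+ 2 != 0.
  apply: contraNneq nreal_j => /eqP; rewrite subr_eq0 eq_sym sqrf_eq1.
  by case/orP => /eqP ->; rewrite ?rpredN real1.
exists ((1 + `|mu i|) * ((1 - mu j ^+ 2) * (1 - mu j ^+ 2)^*) / (1 - `|mu j|) ^+ 2).
  apply: divr_gt0; first by rewrite mulr_gt0 ?mul_conjC_gt0.
  by rewrite real_exprn_even_gt0 ?rpredB ?real1 ?normr_real //= subr_eq0 eq_sym.
rewrite rmorphB rmorphXn /= conjC1.
field; by rewrite subr_eq0 eq_sym.
Qed.

Lemma card_unit_disk :
  [/\ \prod_l (1 - mu l ^+ 2) < 0 ->
        #|[set l | `|mu l| < 1]| = 2 /\ #|[set l | 1 < `|mu l|]| = 1
    & 0 < \prod_l (1 - mu l ^+ 2) ->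
        #|[set l | `|mu l| < 1]| = 1 /\ #|[set l | 1 < `|mu l|]| = 2].
Proof.
have [c c_gt0 ->] := prod_one_sub_sqr_sign.
rewrite pmulr_rlt0 // pmulr_rgt0 //.
by apply: card_lt1_gt1 => [l|]; rewrite ?normr_ge0 // -normr_prod prod_roots normr1.
Qed.

Lemma unit_circle_root l : `|mu l| = 1 -> exists m, mu m = 1 \/ mu m = -1.
Proof.
move=> norm_l; have [c c_gt0 prod_c] := prod_one_sub_sqr_sign.
have /prodf_eq0[m _] : \prod_m (1 - mu m ^+ 2) == 0.
  by rewrite prod_c (bigD1 l) //= norm_l subrr mul0r mulr0.
by rewrite subr_eq0 eq_sym sqrf_eq1 => /orP[] /eqP; exists m; [left | right].
Qed.

Lemma opp1_root_real l : mu l = -1 -> forall m, mu m \is Num.real.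
Proof.
move=> root_l; case: real_or_conj_pair => // -[i [j [k [ijk _ nreal_j conj_k]]]].
have : \prod_m (1 + mu m) != 0.
  rewrite (big_ord3_uniq _ _ ijk) /= conj_k.
  have -> : 1 + (mu j)^* = (1 + mu j)^* by rewrite rmorphD /= conjC1.
  rewrite mulf_neq0 //.
    by rewrite lt0r_neq0 // ltr_pwDl ?ltW ?(conj_pair_real_gt0 ijk).
  rewrite mul_conjC_eq0 addrC addr_eq0.
  by apply: contraNneq nreal_j => ->; rewrite rpredN real1.
by rewrite (bigD1 l) //= root_l subrr mul0r eqxx.
Qed.
End RealCubic.

Section Mesochronic.
Variables (C : numClosedFieldType) (N : 'M[C]_3) (T : C) (mu : 'I_3 -> C).
Hypothesis incompressible : \det (gradPsi T N) = 1.
Hypothesis char_gradPsi : char_poly (gradPsi T N) = \prod_(i < 3) ('X - (mu i)%:P).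

Lemma trace_incompressible : T * \tr N = - (m_f N * T ^+ 2 + d_f N * T ^+ 3).
Proof.
have := incompressible; rewrite /gradPsi det_scalar_add_scale33 -/(m_f N) -/(d_f N) => det1.
transitivity (1 ^+ 3 + 1 ^+ 2 * T * \tr N + 1 * T ^+ 2 * m_f N + T ^+ 3 * d_f N - 1
              - (m_f N * T ^+ 2 + d_f N * T ^+ 3)); first by ring.
by rewrite det1; ring.
Qed.

Lemma prod_sub_eigen x :
  \prod_i (x - mu i) = x ^+ 3 - (3 - m_f N * T ^+ 2 - d_f N * T ^+ 3) * x ^+ 2
                       + (3 - m_f N * T ^+ 2 - 2 * d_f N * T ^+ 3) * x - 1.
Proof.
have -> : \prod_i (x - mu i) = \det ((x - 1)%:M + (- T) *: N).
  have -> : (x - 1)%:M + (- T) *: N = x%:M - gradPsi T N.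
    by rewrite /gradPsi raddfB /= opprD addrA scaleNr.
  rewrite -horner_char_poly char_gradPsi horner_prod.
  by apply: eq_bigr => i _; rewrite hornerXsubC.
rewrite det_scalar_add_scale33 -/(m_f N) -/(d_f N).
transitivity ((x - 1) ^+ 3 - (x - 1) ^+ 2 * (T * \tr N) + (x - 1) * T ^+ 2 * m_f N
              - T ^+ 3 * d_f N); first by ring.
by rewrite trace_incompressible; ring.
Qed.

Lemma prod_eigen : \prod_i mu i = 1.
Proof.
transitivity (- \prod_i (0 - mu i)); first by rewrite !big_ord3 /=; ring.
by rewrite prod_sub_eigen; ring.
Qed.

Lemma prod_one_sub_eigen : \prod_i (1 - mu i) = - (d_f N * T ^+ 3).
Proof. by rewrite prod_sub_eigen; ring. Qed.

Lemma prod_one_add_eigen : \prod_i (1 + mu i) = denS T N.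
Proof.
transitivity (- \prod_i (-1 - mu i)); first by rewrite !big_ord3 /=; ring.
by rewrite prod_sub_eigen /denS; ring.
Qed.

Lemma sum_eigen : \sum_i mu i = 3 - m_f N * T ^+ 2 - d_f N * T ^+ 3.
Proof.
apply: oppr_inj; rewrite -coef2_prod_XsubC3 -char_gradPsi char_poly_trace //.
rewrite /gradPsi mxtraceD mxtrace1 mxtraceZ trace_incompressible; ring.
Qed.

Lemma discr_eigen : discr3 (mu 0) (mu 1) (mu 2) = - Delta T N.
Proof.
have := sum_eigen; have := prod_eigen; have := prod_one_sub_eigen.
rewrite !big_ord3 /= discr3E /= => p1 p3 e1.
have -> : mu 0 + mu 1 + mu 2 = 3 - m_f N * T ^+ 2 - d_f N * T ^+ 3 by rewrite -e1; ring.
have -> : mu 0 * mu 1 * mu 2 = 1 by rewrite -p3; ring.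
have -> : mu 0 * mu 1 + mu 1 * mu 2 + mu 2 * mu 0 = 3 - m_f N * T ^+ 2 - 2 * d_f N * T ^+ 3.
  transitivity ((1 - mu 0) * ((1 - mu 1) * (1 - mu 2)) - 1 + (mu 0 + (mu 1 + mu 2))
                + mu 0 * (mu 1 * mu 2)); first by ring.
  by rewrite p1 e1 p3; ring.
by rewrite /Delta; ring.
Qed.

Lemma eigenvalue_gradPsiE x : eigenvalue (gradPsi T N) x = (\prod_i (x - mu i) == 0).
Proof.
rewrite eigenvalue_root_char rootE char_gradPsi horner_prod.
by under eq_bigr do rewrite hornerXsubC.
Qed.

Lemma eigenvalue_gradPsiP x : reflect (exists i, mu i = x) (eigenvalue (gradPsi T N) x).
Proof.
rewrite eigenvalue_gradPsiE; apply: (iffP (prodf_eq0 _ _)) => [[i _] | [i <-]].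
  by rewrite subr_eq0 => /eqP ->; exists i.
by exists i; rewrite ?subrr.
Qed.

Lemma eigenvalue1_gradPsi : T != 0 -> eigenvalue (gradPsi T N) 1 = (d_f N == 0).
Proof.
move=> T_neq0; rewrite eigenvalue_gradPsiE prod_one_sub_eigen oppr_eq0 mulf_eq0.
by rewrite expf_eq0 (negbTE T_neq0) orbF.
Qed.

Lemma eigenvalueN1_gradPsi : eigenvalue (gradPsi T N) (-1) = (denS T N == 0).
Proof.
rewrite eigenvalue_gradPsiE -prod_one_add_eigen -oppr_eq0.
by rewrite !big_ord3 /=; congr (_ == 0); ring.
Qed.

Hypothesis real_N : N \is a mxOver Num.real.
Hypothesis T_gt0 : 0 < T.

Let T_neq0 : T != 0. Proof. exact: lt0r_neq0. Qed.

Lemma char_gradPsi_real : \prod_i ('X - (mu i)%:P) \is a polyOver Num.real.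
Proof.
rewrite -char_gradPsi char_poly_real //; apply/mxOverP => i j.
by rewrite !mxE rpredD ?rpredM ?rpredMn ?real1 ?(mxOverP real_N) ?gtr0_real.
Qed.

Lemma unit_circle_eigenvalue x :
  eigenvalue (gradPsi T N) x -> `|x| = 1 -> d_f N = 0 \/ denS T N = 0.
Proof.
case/eigenvalue_gradPsiP => l <- /(unit_circle_root char_gradPsi_real prod_eigen).
case=> m [] mu_m; [left; apply/eqP; rewrite -eigenvalue1_gradPsi //
                  | right; apply/eqP; rewrite -eigenvalueN1_gradPsi];
  by apply/eigenvalue_gradPsiP; exists m.
Qed.

Lemma prod_one_sub_sqr_eigen :
  denS T N != 0 -> \prod_i (1 - mu i ^+ 2) = - (Sigma T N * denS T N ^+ 2).
Proof.
move=> den_neq0; transitivity (\prod_i (1 - mu i) * \prod_i (1 + mu i)).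
  by rewrite -big_split; apply: eq_bigr => i _ /=; ring.
by rewrite prod_one_sub_eigen prod_one_add_eigen /Sigma; field.
Qed.

Lemma card_unit_disk_Sigma : denS T N != 0 ->
  [/\ 0 < Sigma T N -> #|[set i | `|mu i| < 1]| = 2 /\ #|[set i | 1 < `|mu i|]| = 1
    & Sigma T N < 0 -> #|[set i | `|mu i| < 1]| = 1 /\ #|[set i | 1 < `|mu i|]| = 2].
Proof.
move=> den_neq0.
have real_den : denS T N \is Num.real.
  by rewrite /denS /m_f /d_f !(rpredB, rpredM, rpredX) ?realn ?det_real ?trace_adj_real ?gtr0_real.
have den2_gt0 : 0 < denS T N ^+ 2 by rewrite real_exprn_even_gt0 ?den_neq0 ?orbT.
have [in2 in1] := card_unit_disk char_gradPsi_real prod_eigen.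
rewrite prod_one_sub_sqr_eigen // in in2 in1.
split => S_sgn; [apply: in2; rewrite oppr_lt0 | apply: in1; rewrite oppr_gt0].
  exact: mulr_gt0.
by rewrite pmulr_llt0.
Qed.

Lemma Sigma_eq0 : denS T N != 0 -> Sigma T N = 0 -> d_f N = 0.
Proof.
move=> den_neq0 /eqP; rewrite mulf_eq0 invr_eq0 (negbTE den_neq0) orbF mulf_eq0.
by rewrite expf_eq0 (negbTE T_neq0) andbF orbF => /eqP.
Qed.
End Mesochronic.

Theorem mainTheorem1 (C : numClosedFieldType) (N : 'M[C]_3) (T : C) (mu : 'I_3 -> C)
  (HNreal : N \is a mxOver Num.real)
  (HT : 0 < T)
  (Hincomp : \det (gradPsi T N) = 1)
  (Hmu : char_poly (gradPsi T N) = \prod_(i < 3) ('X - (mu i)%:P)) :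
  [/\
   (* (i) *)
   denS T N = 0 ->
     [/\ eigenvalue (gradPsi T N) (-1), (forall i, mu i \is Num.real)
       & ~ mesohyperbolic (gradPsi T N)],
   (* (ii) *)
   denS T N != 0 ->
     [/\ 0 < Sigma T N ->
           #|[set i | `|mu i| < 1]| = 2%N /\ #|[set i | 1 < `|mu i|]| = 1%N,
         Sigma T N < 0 ->
           #|[set i | `|mu i| < 1]| = 1%N /\ #|[set i | 1 < `|mu i|]| = 2%N
       & Sigma T N = 0 -> eigenvalue (gradPsi T N) 1],
   (* (iii) *)
   [/\ Delta T N < 0 ->
         (forall i, mu i \is Num.real) /\ (forall i j, i != j -> mu i != mu j),
       0 < Delta T N ->
         exists i j k : 'I_3, [/\ uniq [:: i; j; k], mu i \is Num.real,
                                  mu j \isn't Num.real & mu k = (mu j)^*]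
     & Delta T N = 0 ->
         (forall i, mu i \is Num.real) /\ (exists i j : 'I_3, i != j /\ mu i = mu j)]
   (* (iv) *)
   & mesohyperbolic (gradPsi T N) <-> (d_f N != 0 /\ denS T N != 0)].
Proof.
have real_char := char_gradPsi_real Hmu HNreal HT.
have eig1 := eigenvalue1_gradPsi Hincomp Hmu (lt0r_neq0 HT).
have eigN1 := eigenvalueN1_gradPsi Hincomp Hmu.
split.
- move=> den0; have eig_N1 : eigenvalue (gradPsi T N) (-1) by rewrite eigN1 den0.
  split => //; last by move/(_ _ eig_N1); rewrite normrN normr1 eqxx.
  have [l] := eigenvalue_gradPsiP Hmu _ eig_N1.
  exact: opp1_root_real real_char (prod_eigen Hincomp Hmu) l.
- move=> den_neq0; have [in2 in1] := card_unit_disk_Sigma Hincomp Hmu HNreal HT den_neq0.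
  by split=> // /(Sigma_eq0 HT den_neq0) d0; rewrite eig1 d0.
- rewrite -[Delta T N]opprK -(discr_eigen Hincomp Hmu) oppr_lt0 oppr_gt0.
  split=> [/(discr_gt0_real_distinct real_char) | /(discr_lt0_conj_pair real_char) | ] //.
  by move/eqP; rewrite oppr_eq0 => /eqP /(discr_eq0_real_multiple real_char).
- split=> [meso | [d_neq0 den_neq0] x eig_x].
    split; apply/negP.
      by rewrite -eig1 => /meso; rewrite normr1 eqxx.
    by rewrite -eigN1 => /meso; rewrite normrN normr1 eqxx.
  by apply/eqP => /(unit_circle_eigenvalue Hincomp Hmu HNreal HT eig_x) [] /eqP; apply/negP.
Qed.
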